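(* Let $a_k\ge0$, $b_k>0$ $(k\ge0)$ be such that $\mathcal{A}(t)=\sum_{k=0}^\infty a_k(k+1)^{-t}$ and $\mathcal{B}(t)=\sum_{k=0}^\infty b_k(k+1)^{-t}$ converge on $(0,\infty)$. If $\{a_k/b_k\}$ is increasing (resp. decreasing) for all $k\ge0$, then $t\mapsto\mathcal{A}(t)/\mathcal{B}(t)$ is decreasing (resp. increasing) on $(0,\infty)$ and $t\mapsto\mathcal{A}(1-t)/\mathcal{B}(1-t)$ is increasing (resp. decreasing) on $(-\infty,1)$. *)

From Stdlib Require Import Reals.
From Coquelicot Require Import Coquelicot.
Open Scope R_scope.

Definition dterm (c : nat -> R) (t : R) (k : nat) : R :=
  c k * Rpower (INR k + 1) (- t).

Definition Dser (c : nat -> R) (t : R) : R := Series (dterm c t).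

(* Fix [0 < s <= t] and put [lam = A(s)/B(s)], [c_k = a_k/b_k], [w_k = (k+1)^(s-t)].
   Then [A(t) - lam B(t) = sum_k u_k w_k] with [u_k = b_k (k+1)^(-s) (c_k - lam)],
   and [sum_k u_k = A(s) - lam B(s) = 0].  When [c] increases, [u_k] is [<= 0] up
   to some index and [> 0] after it, while the weight [w] decreases; with [m] the
   value of [w] at the sign change, [u_k (w_k - m) <= 0] for every [k], hence
   [sum_k u_k w_k <= m sum_k u_k = 0], i.e. [A(t)/B(t) <= A(s)/B(s)].
   The decreasing case follows by replacing [a] with [-a]. *)

From Stdlib Require Import Reals Lra Lia Arith Wf_nat Classical.
From Coquelicot Require Import Coquelicot.
Open Scope R_scope.

Lemma Series_nonneg (u : nat -> R) :
  (forall k, 0 <= u k) -> ex_series u -> 0 <= Series u.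
Proof.
  intros Hu Hex.
  rewrite <- (Rmult_0_l (Series u)), <- Series_scal_l.
  apply Series_le; [|exact Hex].
  intros k; rewrite Rmult_0_l; split; [lra | apply Hu].
Qed.

Lemma Series_pos (u : nat -> R) :
  (forall k, 0 < u k) -> ex_series u -> 0 < Series u.
Proof.
  intros Hu Hex.
  rewrite Series_incr_1 by exact Hex.
  assert (Htail : 0 <= Series (fun k => u (S k))).
  { apply Series_nonneg; [intros k; left; apply Hu|].
    apply (ex_series_incr_1 u), Hex. }
  specialize (Hu 0%nat); lra.
Qed.

Lemma is_series_mult_le_level (u w : nat -> R) (U UW m : R) :
  is_series u U -> is_series (fun k => u k * w k) UW ->
  (forall k, u k * (w k - m) <= 0) ->
  UW <= m * U.
Proof.
  intros Hu Huw Hsign.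
  assert (Hdiff : is_series (fun k => m * u k - u k * w k) (m * U - UW)).
  { exact (is_series_minus _ _ _ _ (is_series_scal_l m _ _ Hu) Huw). }
  assert (Hnonneg : forall k, 0 <= m * u k - u k * w k).
  { intros k; specialize (Hsign k); lra. }
  assert (H := Series_nonneg _ Hnonneg (ex_intro _ _ Hdiff)).
  rewrite (is_series_unique _ _ Hdiff) in H.
  lra.
Qed.

Lemma sign_change_level (c w : nat -> R) (lam : R) :
  Un_growing c -> Un_decreasing w -> (forall k, 0 <= w k) ->
  exists m, forall k, (c k - lam) * (w k - m) <= 0.
Proof.
  intros Hc Hw Hw0.
  destruct (classic (exists k, lam < c k)) as [Hex | Hnone].
  - destruct (dec_inh_nat_subset_has_unique_least_element (fun k => lam < c k)
                (fun k => classic (lam < c k)) Hex) as [n [[Hn Hmin] _]].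
    exists (w n); intros k.
    destruct (le_lt_dec n k) as [Hnk | Hkn].
    + assert (c n <= c k) by (apply Rge_le, growing_prop; assumption).
      assert (w k <= w n) by (apply decreasing_prop; assumption).
      nra.
    + assert (Hck : c k <= lam).
      { apply Rnot_lt_le; intros Hlt; specialize (Hmin k Hlt); lia. }
      assert (w n <= w k) by (apply decreasing_prop; [|apply Nat.lt_le_incl]; assumption).
      nra.
  - exists 0; intros k.
    assert (c k <= lam) by (apply Rnot_lt_le; intros Hlt; apply Hnone; exists k; exact Hlt).
    specialize (Hw0 k); nra.
Qed.

Lemma Rpower_le_base_npos (x y e : R) :
  e <= 0 -> 0 < x <= y -> Rpower y e <= Rpower x e.
Proof.
  intros He Hxy.
  rewrite <- (Ropp_involutive e), (Rpower_Ropp x), (Rpower_Ropp y).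
  apply Rinv_le_contravar; [apply exp_pos|].
  apply Rle_Rpower_l; lra.
Qed.

Lemma Dser_pos (b : nat -> R) (t : R) :
  (forall k, 0 < b k) -> ex_series (dterm b t) -> 0 < Dser b t.
Proof.
  intros hb Hex; apply Series_pos; [|exact Hex].
  intros k; apply Rmult_lt_0_compat; [apply hb | apply exp_pos].
Qed.

Lemma Dser_opp (a : nat -> R) (t : R) :
  Dser (fun k => - a k) t = - Dser a t.
Proof.
  unfold Dser; rewrite <- Series_opp.
  apply Series_ext; intros k; unfold dterm; ring.
Qed.

Lemma ex_series_dterm_opp (a : nat -> R) (t : R) :
  ex_series (dterm a t) -> ex_series (dterm (fun k => - a k) t).
Proof.
  intros Hex.
  refine (ex_series_ext (fun k => - dterm a t k) _ _ (ex_series_opp _ Hex)).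
  intros k; simpl; unfold dterm; ring.
Qed.

Lemma is_series_dterm_sub_scal (a b : nat -> R) (lam t : R) :
  ex_series (dterm a t) -> ex_series (dterm b t) ->
  is_series (fun k => dterm a t k - lam * dterm b t k) (Dser a t - lam * Dser b t).
Proof.
  intros Ha Hb.
  exact (is_series_minus _ _ _ _ (Series_correct _ Ha)
           (is_series_scal_l lam _ _ (Series_correct _ Hb))).
Qed.

Lemma Dser_ratio_antitone (a b : nat -> R)
  (hb : forall k, 0 < b k)
  (hAc : forall t, 0 < t -> ex_series (dterm a t))
  (hBc : forall t, 0 < t -> ex_series (dterm b t)) :
  Un_growing (fun k => a k / b k) ->
  forall s t, 0 < s -> s <= t -> Dser a t / Dser b t <= Dser a s / Dser b s.
Proof.
  intros Hc s t hs hst.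
  assert (ht : 0 < t) by lra.
  assert (HBs := Dser_pos b s hb (hBc s hs)).
  assert (HBt := Dser_pos b t hb (hBc t ht)).
  set (lam := Dser a s / Dser b s).
  set (u := fun k => dterm a s k - lam * dterm b s k).
  set (w := fun k : nat => Rpower (INR k + 1) (s - t)).
  assert (Hu : is_series u 0).
  { replace 0 with (Dser a s - lam * Dser b s) by (unfold lam; field; lra).
    apply is_series_dterm_sub_scal; [apply hAc | apply hBc]; exact hs. }
  assert (Hweight : forall k, dterm a t k - lam * dterm b t k = u k * w k).
  { intros k; unfold u, w, dterm.
    replace (- t) with (- s + (s - t)) by ring.
    rewrite Rpower_plus; ring. }
  assert (Huw : is_series (fun k => u k * w k) (Dser a t - lam * Dser b t)).
  { refine (is_series_ext _ _ _ Hweight _).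
    apply is_series_dterm_sub_scal; [apply hAc | apply hBc]; exact ht. }
  assert (Hw : Un_decreasing w).
  { intros k; apply Rpower_le_base_npos; [lra|].
    rewrite S_INR; pose proof (pos_INR k); lra. }
  assert (Hw0 : forall k, 0 <= w k) by (intros k; left; apply exp_pos).
  destruct (sign_change_level _ w lam Hc Hw Hw0) as [m Hm].
  assert (Hsign : forall k, u k * (w k - m) <= 0).
  { intros k.
    assert (Hbk : 0 < dterm b s k) by (apply Rmult_lt_0_compat; [apply hb | apply exp_pos]).
    replace (u k) with (dterm b s k * (a k / b k - lam))
      by (unfold u, dterm; field; apply Rgt_not_eq, hb).
    specialize (Hm k); rewrite Rmult_assoc; nra. }
  assert (H := is_series_mult_le_level _ _ _ _ m Hu Huw Hsign).
  apply Rle_div_l; lra.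
Qed.

Lemma Dser_ratio_monotone (a b : nat -> R)
  (hb : forall k, 0 < b k)
  (hAc : forall t, 0 < t -> ex_series (dterm a t))
  (hBc : forall t, 0 < t -> ex_series (dterm b t)) :
  Un_decreasing (fun k => a k / b k) ->
  forall s t, 0 < s -> s <= t -> Dser a s / Dser b s <= Dser a t / Dser b t.
Proof.
  intros Hc s t hs hst.
  assert (Hc' : Un_growing (fun k => - a k / b k)).
  { intros k; unfold Rdiv; rewrite !Ropp_mult_distr_l_reverse; apply Ropp_le_contravar, Hc. }
  assert (H := Dser_ratio_antitone (fun k => - a k) b hb
                 (fun t ht => ex_series_dterm_opp a t (hAc t ht)) hBc Hc' s t hs hst).
  rewrite !Dser_opp in H; unfold Rdiv in H |- *.
  rewrite !Ropp_mult_distr_l_reverse in H; lra.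
Qed.

Theorem corollary9 (a b : nat -> R)
  (ha : forall k, 0 <= a k) (hb : forall k, 0 < b k)
  (hAc : forall t, 0 < t -> ex_series (dterm a t))
  (hBc : forall t, 0 < t -> ex_series (dterm b t)) :
  ((forall k, a k / b k <= a (S k) / b (S k)) ->
     (forall s t, 0 < s -> s <= t ->
        Dser a t / Dser b t <= Dser a s / Dser b s) /\
     (forall s t, s <= t -> t < 1 ->
        Dser a (1 - s) / Dser b (1 - s) <= Dser a (1 - t) / Dser b (1 - t)))
  /\
  ((forall k, a (S k) / b (S k) <= a k / b k) ->
     (forall s t, 0 < s -> s <= t ->
        Dser a s / Dser b s <= Dser a t / Dser b t) /\
     (forall s t, s <= t -> t < 1 ->
        Dser a (1 - t) / Dser b (1 - t) <= Dser a (1 - s) / Dser b (1 - s))).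
Proof.
  split; intros Hc.
  - assert (H := Dser_ratio_antitone a b hb hAc hBc Hc).
    split; [exact H | intros s t hst ht; apply H; lra].
  - assert (H := Dser_ratio_monotone a b hb hAc hBc Hc).
    split; [exact H | intros s t hst ht; apply H; lra].
Qed.
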